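(* Let $\varepsilon\in(0,\frac12)$. For all sufficiently large $n$ and all $k\le n$, $$|\mathsf{FewBranchHSW}^n_k|\le\exp\big(8n^{1/2-\varepsilon}\log n\big)\,\mu^k .$$
   Context: On $\mathbb{Z}^2$ with connective constant $\mu$, $\mathsf{HSW}_k$ denotes half-space walks of length $k$ (self-avoiding, $\gamma_0=O$, $y(\gamma_t)>0$ for $t>0$). Branch decomposition of $\gamma\in\mathsf{HSW}_k$: set $a_0=0$; for $i\ge1$ odd let $a_i$ be the largest $t\in[a_{i-1},k]$ with $y(\gamma_t)=\max_{s\in[a_{i-1},k]}y(\gamma_s)$, and for $i\ge2$ even let $a_i$ be the largest $t\in[a_{i-1},k]$ with $y(\gamma_t)=\min_{s\in[a_{i-1},k]}y(\gamma_s)$; stop at the first $r$ with $a_r=k$. The subwalks $\gamma_{[a_{i},a_{i+1}]}$, $0\le i<r$, are the branches of $\gamma$, and $r$ is its number of branches. $\mathsf{FewBranchHSW}^n_k$ is the set of $\gamma\in\mathsf{HSW}_k$ with fewer than $7n^{1/2-\varepsilon}$ branches. *)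

From Stdlib Require Import Reals ZArith List.
Import ListNotations.
Open Scope R_scope.

Definition point := (Z * Z)%type.
Definition yc (p : point) : Z := snd p.

Definition adj (p q : point) : Prop :=
  (Z.abs (fst p - fst q) + Z.abs (snd p - snd q))%Z = 1%Z.

(* t-th vertex gamma_t of a walk given as the list [gamma_0; ...; gamma_k] *)
Definition pt (g : list point) (t : nat) : point := nth t g (0%Z, 0%Z).

Definition SAW (k : nat) (g : list point) : Prop :=
  length g = S k /\ pt g 0 = (0%Z, 0%Z) /\ NoDup g /\
  (forall t, (t < k)%nat -> adj (pt g t) (pt g (S t))).

Definition HSW (k : nat) (g : list point) : Prop :=
  SAW k g /\ (forall t, (0 < t <= k)%nat -> (0 < yc (pt g t))%Z).

Definition last_argmax (g : list point) (k b a : nat) : Prop :=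
  (b <= a <= k)%nat /\
  (forall s, (b <= s <= k)%nat -> (yc (pt g s) <= yc (pt g a))%Z) /\
  (forall s, (a < s <= k)%nat -> (yc (pt g s) < yc (pt g a))%Z).

Definition last_argmin (g : list point) (k b a : nat) : Prop :=
  (b <= a <= k)%nat /\
  (forall s, (b <= s <= k)%nat -> (yc (pt g a) <= yc (pt g s))%Z) /\
  (forall s, (a < s <= k)%nat -> (yc (pt g a) < yc (pt g s))%Z).

Definition num_branches (g : list point) (k r : nat) : Prop :=
  exists a : nat -> nat,
    a 0%nat = 0%nat /\
    (forall i, (1 <= i <= r)%nat ->
       if Nat.odd i then last_argmax g k (a (pred i)) (a i)
       else last_argmin g k (a (pred i)) (a i)) /\
    a r = k /\
    (forall i, (i < r)%nat -> a i <> k).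

Definition FewBranchHSW (eps : R) (n k : nat) (g : list point) : Prop :=
  HSW k g /\ exists r, num_branches g k r /\
    INR r < 7 * Rpower (INR n) (1/2 - eps).

Definition IsCard (P : list point -> Prop) (m : nat) : Prop :=
  exists L, NoDup L /\ (forall x, In x L <-> P x) /\ length L = m.

(* Cut a half-space walk at the last point of maximal height: the first piece
   is a bridge, and the rest, reflected vertically about the cut point, is a
   half-space walk with one branch fewer.  Concatenating bridges is injective,
   so bridges of length [m] are supermultiplicative and number at most [mu^m];
   peeling branches therefore bounds the walks with [r] branches by
   [(k + 1)^r mu^k], and summing over [r < 7 n^(1/2 - eps)] gives the claim
   once [ln n >= 14]. *)

From Stdlib Require Import Reals ZArith List Lia Lra ClassicalEpsilon.
Import ListNotations.
Open Scope R_scope.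

Definition at_most {X : Type} (P : X -> Prop) (B : R) : Prop :=
  forall L, NoDup L -> (forall x, In x L -> P x) -> INR (length L) <= B.

Lemma at_most_nonneg {X : Type} (P : X -> Prop) B : at_most P B -> 0 <= B.
Proof. intros H. apply (H []); [constructor | contradiction]. Qed.

Lemma at_most_le {X : Type} (P : X -> Prop) B B' : at_most P B -> B <= B' -> at_most P B'.
Proof. intros H HB L HL HP. specialize (H L HL HP). lra. Qed.

Lemma at_most_sub {X : Type} (P Q : X -> Prop) B :
  (forall x, P x -> Q x) -> at_most Q B -> at_most P B.
Proof. intros HPQ H L HL HP. apply H; auto. Qed.

Lemma at_most_empty {X : Type} (P : X -> Prop) : (forall x, ~ P x) -> at_most P 0.
Proof. intros H [|x L] _ HP; [simpl; lra | destruct (H x (HP x (or_introl eq_refl)))]. Qed.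

Lemma at_most_singleton {X : Type} (P : X -> Prop) x0 : (forall x, P x -> x = x0) -> at_most P 1.
Proof.
  intros H L HL HP. change 1 with (INR (length [x0])). apply le_INR, NoDup_incl_length; auto.
  intros x Hx. rewrite (H x (HP x Hx)). now left.
Qed.

Lemma at_most_remove {X : Type} (P : X -> Prop) B x0 :
  at_most P B -> P x0 -> at_most (fun x => P x /\ x <> x0) (B - 1).
Proof.
  intros H Hx0 L HL HP.
  assert (Hnotin : ~ In x0 L) by (intros Hin; now apply (HP x0 Hin)).
  enough (INR (length (x0 :: L)) <= B) by (rewrite length_cons, S_INR in *; lra).
  apply H; [now constructor |]. intros x [<- | Hx]; [exact Hx0 | apply HP, Hx].
Qed.

Lemma at_most_inj {X Y : Type} (P : X -> Prop) (Q : Y -> Prop) (f : X -> Y) B :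
  (forall x, P x -> Q (f x)) -> (forall x x', P x -> P x' -> f x = f x' -> x = x') ->
  at_most Q B -> at_most P B.
Proof.
  intros HQ Hinj H L HL HP. rewrite <- (length_map f L). apply H.
  - apply NoDup_map_NoDup_ForallPairs; auto. intros x x' Hx Hx'. apply Hinj; auto.
  - intros y Hy. apply in_map_iff in Hy as [x [<- Hx]]. auto.
Qed.

(* Strong induction on the list: the elements lying over a fixed [y0] are
   counted by the fibre bound, the others by induction with one point fewer
   in the image. *)
Lemma at_most_fibers {X Y : Type} (P : X -> Prop) (rel : X -> Y -> Prop) B1 B2 :
  0 <= B2 -> (forall x, P x -> exists y, rel x y) ->
  at_most (fun y => exists x, P x /\ rel x y) B1 ->
  (forall y, at_most (fun x => P x /\ rel x y) B2) ->
  at_most P (B1 * B2).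
Proof.
  intros HB2 Hcover Himg Hfib L. revert P B1 Hcover Himg Hfib.
  induction L as [L IH] using (well_founded_ind (Wf_nat.well_founded_ltof _ (@length X))).
  intros P B1 Hcover Himg Hfib HL HP. destruct L as [|x0 L'].
  { simpl. apply Rmult_le_pos; [exact (at_most_nonneg _ _ Himg) | exact HB2]. }
  destruct (Hcover x0 (HP x0 (or_introl eq_refl))) as [y0 Hy0].
  set (over_y0 x := if excluded_middle_informative (rel x y0) then true else false).
  assert (Hover : forall x, over_y0 x = true <-> rel x y0).
  { intros x. unfold over_y0. destruct (excluded_middle_informative _); split; easy. }
  rewrite <- (filter_length over_y0), plus_INR.
  replace (filter (fun x => negb (over_y0 x)) (x0 :: L'))
    with (filter (fun x => negb (over_y0 x)) L')
    by (simpl; now rewrite (proj2 (Hover x0) Hy0)).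
  assert (Hon : INR (length (filter over_y0 (x0 :: L'))) <= B2).
  { apply (Hfib y0). now apply NoDup_filter.
    intros x Hx. apply filter_In in Hx as [Hx Hx']. split; [apply HP, Hx | now apply Hover]. }
  assert (Hoff : INR (length (filter (fun x => negb (over_y0 x)) L')) <= (B1 - 1) * B2).
  { apply (IH _ (proj2 (Nat.lt_succ_r _ _) (filter_length_le _ _))
            (fun x => P x /\ ~ rel x y0)).
    - intros x [Hx _]. apply Hcover, Hx.
    - refine (at_most_sub _ _ _ _ (at_most_remove _ _ y0 Himg _)).
      + intros y [x [[Hx Hnot] Hxy]]. split; [eauto | intros ->; contradiction].
      + exists x0. split; [apply HP; now left | exact Hy0].
    - intros y. eapply at_most_sub; [| apply (Hfib y)]. intros x [[Hx _] Hxy]. auto.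
    - apply NoDup_filter. now inversion HL.
    - intros x Hx. apply filter_In in Hx as [Hx Hx']. split; [apply HP; now right |].
      rewrite <- Hover. now destruct (over_y0 x). }
  lra.
Qed.

Lemma at_most_lt (M : nat) (P : nat -> Prop) : (forall r, P r -> (r < M)%nat) -> at_most P (INR M).
Proof.
  intros H L HL HP. apply le_INR. rewrite <- (length_seq M 0). apply NoDup_incl_length; auto.
  intros r Hr. apply in_seq. specialize (H r (HP r Hr)). lia.
Qed.

Definition walk_of (f : nat -> point) (n : nat) : list point := map f (seq 0 (S n)).

Lemma length_walk_of f n : length (walk_of f n) = S n.
Proof. unfold walk_of. now rewrite length_map, length_seq. Qed.

Lemma pt_walk_of f n t : (t <= n)%nat -> pt (walk_of f n) t = f t.
Proof.
  intros Ht. unfold pt, walk_of. rewrite nth_indep with (d' := f 0%nat)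
    by (rewrite length_map, length_seq; lia).
  rewrite map_nth, seq_nth; [reflexivity | lia].
Qed.

Lemma walk_ext g h :
  length g = length h -> (forall t, (t < length g)%nat -> pt g t = pt h t) -> g = h.
Proof. intros Hlen Hpt. now apply nth_ext with (d := (0%Z, 0%Z)) (d' := (0%Z, 0%Z)). Qed.

Lemma NoDup_pt g :
  NoDup g <-> forall i j, (i < length g)%nat -> (j < length g)%nat -> pt g i = pt g j -> i = j.
Proof. apply NoDup_nth. Qed.

Definition shift (e p : point) : point := (fst e + fst p, snd e + snd p)%Z.

Definition flip (e p : point) : point := (fst p - fst e, snd e - snd p)%Z.

Lemma yc_shift e p : yc (shift e p) = (yc e + yc p)%Z.
Proof. reflexivity. Qed.

Lemma yc_flip e p : yc (flip e p) = (yc e - yc p)%Z.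
Proof. reflexivity. Qed.

Lemma shift_origin e : shift e (0%Z, 0%Z) = e.
Proof. destruct e; unfold shift; simpl; f_equal; ring. Qed.

Lemma flip_self e : flip e e = (0%Z, 0%Z).
Proof. unfold flip; f_equal; ring. Qed.

Lemma shift_inj e p q : shift e p = shift e q -> p = q.
Proof. destruct p, q; unfold shift; simpl; intros H; injection H; intros; f_equal; lia. Qed.

Lemma flip_inj e p q : flip e p = flip e q -> p = q.
Proof. destruct p, q; unfold flip; simpl; intros H; injection H; intros; f_equal; lia. Qed.

Lemma adj_shift e p q : adj p q -> adj (shift e p) (shift e q).
Proof. unfold adj, shift; simpl. intros H. rewrite <- H. f_equal; f_equal; ring. Qed.

Lemma adj_flip e p q : adj p q -> adj (flip e p) (flip e q).
Proof.
  unfold adj, flip; simpl. intros H. rewrite <- H, <- Z.abs_opp with (n := (snd p - snd q)%Z).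
  f_equal; f_equal; ring.
Qed.

Definition Bridge (m : nat) (g : list point) : Prop :=
  HSW m g /\ forall t, (t <= m)%nat -> (yc (pt g t) <= yc (pt g m))%Z.

Lemma Bridge_top_nonneg m g : Bridge m g -> (0 <= yc (pt g m))%Z.
Proof. intros [[[_ [Og _]] _] Mg]. specialize (Mg 0%nat (Nat.le_0_l m)). now rewrite Og in Mg. Qed.

Definition bridge_concat (m : nat) (g h : list point) (p : nat) : list point :=
  walk_of (fun t => if t <=? m then pt g t else shift (pt g m) (pt h (t - m))) (m + p).

Lemma length_bridge_concat m g h p : length (bridge_concat m g h p) = S (m + p).
Proof. apply length_walk_of. Qed.

Lemma pt_concat_l m g h p t : (t <= m)%nat -> pt (bridge_concat m g h p) t = pt g t.
Proof.
  intros Ht. unfold bridge_concat. rewrite pt_walk_of by lia.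
  destruct (Nat.leb_spec t m); [reflexivity | lia].
Qed.

Lemma pt_concat_r m g h p t : pt h 0 = (0%Z, 0%Z) -> (m <= t <= m + p)%nat ->
  pt (bridge_concat m g h p) t = shift (pt g m) (pt h (t - m)).
Proof.
  intros Oh Ht. unfold bridge_concat. rewrite pt_walk_of by lia.
  destruct (Nat.leb_spec t m); [| reflexivity].
  replace t with m by lia. now rewrite Nat.sub_diag, Oh, shift_origin.
Qed.

(* The second bridge starts weakly above the whole first one and ends weakly
   below its own endpoint, which keeps the concatenation self-avoiding and a
   bridge. *)
Lemma Bridge_concat m p g h : Bridge m g -> Bridge p h -> Bridge (m + p) (bridge_concat m g h p).
Proof.
  intros Hg Hh. pose proof (Bridge_top_nonneg _ _ Hg) as Hgm. pose proof (Bridge_top_nonneg _ _ Hh) as Hhp.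
  destruct Hg as [[[Lg [Og [Ng Ag]]] Yg] Mg], Hh as [[[Lh [Oh [Nh Ah]]] Yh] Mh].
  assert (Hl : forall t, (t <= m)%nat -> pt (bridge_concat m g h p) t = pt g t)
    by (intros; now apply pt_concat_l).
  assert (Hr : forall t, (m <= t <= m + p)%nat ->
                 pt (bridge_concat m g h p) t = shift (pt g m) (pt h (t - m)))
    by (intros; now apply pt_concat_r).
  refine (conj (conj (conj _ (conj _ (conj _ _))) _) _).
  - apply length_bridge_concat.
  - now rewrite Hl, Og by lia.
  - rewrite NoDup_pt, length_bridge_concat. intros i j Hi Hj Eij.
    rewrite NoDup_pt in Ng, Nh.
    destruct (Nat.le_gt_cases i m), (Nat.le_gt_cases j m).
    + rewrite !Hl in Eij by lia. apply Ng; lia || easy.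
    + apply (f_equal yc) in Eij. rewrite Hl, Hr, yc_shift in Eij by lia.
      specialize (Mg i ltac:(lia)). specialize (Yh (j - m)%nat ltac:(lia)). lia.
    + apply (f_equal yc) in Eij. rewrite Hr, Hl, yc_shift in Eij by lia.
      specialize (Mg j ltac:(lia)). specialize (Yh (i - m)%nat ltac:(lia)). lia.
    + rewrite !Hr in Eij by lia. apply shift_inj in Eij.
      enough ((i - m) = (j - m))%nat by lia. apply Nh; lia || easy.
  - intros t Ht. destruct (Nat.lt_ge_cases t m).
    + rewrite !Hl by lia. apply Ag. lia.
    + rewrite !Hr by lia. replace (S t - m)%nat with (S (t - m)) by lia. apply adj_shift, Ah. lia.
  - intros t Ht. destruct (Nat.le_gt_cases t m).
    + rewrite Hl by lia. apply Yg. lia.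
    + rewrite Hr, yc_shift by lia. specialize (Yh (t - m)%nat ltac:(lia)). lia.
  - intros t Ht. rewrite (Hr (m + p)%nat), yc_shift by lia.
    replace (m + p - m)%nat with p by lia.
    destruct (Nat.le_gt_cases t m).
    + rewrite Hl by lia. specialize (Mg t ltac:(lia)). lia.
    + rewrite Hr, yc_shift by lia. specialize (Mh (t - m)%nat ltac:(lia)). lia.
Qed.

Lemma bridge_concat_inj m p g h g' h' : Bridge m g -> Bridge m g' -> Bridge p h -> Bridge p h' ->
  bridge_concat m g h p = bridge_concat m g' h' p -> g = g' /\ h = h'.
Proof.
  intros [[[Lg _] _] _] [[[Lg' _] _] _] [[[Lh [Oh _]] _] _] [[[Lh' [Oh' _]] _] _] E.
  assert (Eg : g = g').
  { apply walk_ext; [congruence |]. intros t Ht.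
    rewrite <- (pt_concat_l m g h p t), <- (pt_concat_l m g' h' p t), E by lia. reflexivity. }
  subst g'. split; [reflexivity |].
  apply walk_ext; [congruence |]. intros t Ht.
  assert (Ht' := f_equal (fun w => pt w (m + t)%nat) E). cbv beta in Ht'.
  rewrite !pt_concat_r in Ht' by (assumption || lia). replace (m + t - m)%nat with t in Ht' by lia.
  now apply shift_inj in Ht'.
Qed.

Lemma NoDup_list_prod {A B} (l1 : list A) (l2 : list B) :
  NoDup l1 -> NoDup l2 -> NoDup (list_prod l1 l2).
Proof.
  induction 1 as [|a l1 Ha Hl1 IH]; intros Hl2; simpl; [constructor |].
  apply NoDup_app; [| now apply IH |].
  - apply NoDup_map_NoDup_ForallPairs; [| exact Hl2]. intros x y _ _ E. now injection E.
  - intros [x y] Hxy Hin. apply in_map_iff in Hxy as [z [E _]]. injection E as <- _.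
    apply in_prod_iff in Hin. tauto.
Qed.

Lemma Bridge_origin : Bridge 0 [(0%Z, 0%Z)].
Proof.
  refine (conj (conj (conj eq_refl (conj eq_refl (conj _ _))) _) _).
  - constructor; [easy | constructor].
  - intros; lia.
  - intros; lia.
  - intros t Ht. replace t with 0%nat by lia. lia.
Qed.

Lemma bridges_pow m (Lb : list (list point)) :
  NoDup Lb -> (forall b, In b Lb -> Bridge m b) ->
  forall j, exists Lj, NoDup Lj /\ (forall b, In b Lj -> Bridge (j * m) b) /\
                       length Lj = (length Lb ^ j)%nat.
Proof.
  intros HLb HB. induction j as [|j [Lj [HLj [HBj Hlen]]]].
  { exists [[(0%Z, 0%Z)]]. split; [constructor; [easy | constructor] |].
    split; [intros b [<- | []]; exact Bridge_origin | reflexivity]. }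
  exists (map (fun gh => bridge_concat m (fst gh) (snd gh) (j * m)) (list_prod Lb Lj)).
  split; [| split].
  - apply NoDup_map_NoDup_ForallPairs; [| now apply NoDup_list_prod].
    intros [g h] [g' h'] Hgh Hgh' E. apply in_prod_iff in Hgh, Hgh'.
    destruct (bridge_concat_inj m (j * m) g h g' h'); try (apply HB || apply HBj); try tauto.
    now subst.
  - intros b Hb. apply in_map_iff in Hb as [[g h] [<- Hgh]]. apply in_prod_iff in Hgh.
    apply Bridge_concat; [apply HB | apply HBj]; tauto.
  - now rewrite length_map, length_prod, Hlen.
Qed.

Lemma Rpower_pos x y : 0 < Rpower x y.
Proof. apply exp_pos. Qed.

Lemma exp_le_compat x y : x <= y -> exp x <= exp y.
Proof. intros [H | ->]; [left; now apply exp_increasing | apply Rle_refl]. Qed.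

Lemma ln_le_compat x y : 0 < x -> x <= y -> ln x <= ln y.
Proof. intros Hx [H | ->]; [left; now apply ln_increasing | apply Rle_refl]. Qed.

Lemma Un_cv_ge_subseq (u : nat -> R) mu a m : (1 <= m)%nat -> Un_cv u mu ->
  (forall j, (1 <= j)%nat -> a <= u (j * m)%nat) -> a <= mu.
Proof.
  intros Hm Hu Ha. apply Rnot_lt_le. intros Hlt.
  destruct (Hu (a - mu) ltac:(lra)) as [N HN].
  specialize (HN (S N * m)%nat ltac:(nia)). specialize (Ha (S N) ltac:(lia)).
  unfold R_dist in HN. apply Rabs_def2 in HN. lra.
Qed.

Lemma root_limit_nonneg (c : nat -> nat) mu :
  Un_cv (fun n => Rpower (INR (c n)) (/ INR n)) mu -> 0 <= mu.
Proof. intros Hmu. apply (Un_cv_ge_subseq _ _ _ 1 (le_n 1) Hmu). intros; left; apply Rpower_pos. Qed.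

(* If [l ^ j <= c (j m)] for all [j], then along the subsequence [n = j m]
   the [n]-th roots of [c n] stay above [l ^ (1/m)]. *)
Lemma pow_le_of_root_limit (c : nat -> nat) mu (l m : nat) : (1 <= m)%nat -> (1 <= l)%nat ->
  Un_cv (fun n => Rpower (INR (c n)) (/ INR n)) mu ->
  (forall j, (l ^ j <= c (j * m))%nat) -> INR l <= mu ^ m.
Proof.
  intros Hm Hl Hmu Hsup.
  assert (Hm' : 0 < INR m) by (apply lt_0_INR; lia).
  assert (Hl' : 0 < INR l) by (apply lt_0_INR; lia).
  assert (Hroot : Rpower (INR l) (/ INR m) <= mu).
  { apply (Un_cv_ge_subseq _ _ _ m Hm Hmu). intros j Hj.
    assert (Hj' : 0 < INR j) by (apply lt_0_INR; lia).
    assert (Hpow : INR l ^ j <= INR (c (j * m)%nat)) by (rewrite <- pow_INR; apply le_INR, Hsup).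
    apply ln_le_compat in Hpow; [| now apply pow_lt]. rewrite ln_pow in Hpow by exact Hl'.
    apply exp_le_compat. rewrite mult_INR, Rinv_mult.
    apply Rmult_le_compat_l with (r := / INR j * / INR m) in Hpow;
      [| apply Rmult_le_pos; left; now apply Rinv_0_lt_compat].
    replace (/ INR j * / INR m * (INR j * ln (INR l))) with (/ INR m * ln (INR l))
      in Hpow by (field; lra).
    lra. }
  rewrite <- (Rpower_1 (INR l)), <- (Rinv_l (INR m)), <- Rpower_mult, Rpower_pow by (apply Rpower_pos || lra).
  apply pow_incr. split; [left; apply Rpower_pos | exact Hroot].
Qed.

Lemma Bridge_SAW m g : Bridge m g -> SAW m g.
Proof. intros [[H _] _]. exact H. Qed.

(* Bridges are supermultiplicative: concatenation injects [j]-tuples of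
   bridges of length [m] into walks of length [j m]. *)
Lemma bridge_bound (c : nat -> nat) (Hc : forall n, IsCard (SAW n) (c n)) mu
  (Hmu : Un_cv (fun n => Rpower (INR (c n)) (/ INR n)) mu) m :
  (1 <= m)%nat -> at_most (Bridge m) (mu ^ m).
Proof.
  intros Hm Lb HLb HB.
  destruct (length Lb) as [|l] eqn:Hl.
  { apply pow_le, (root_limit_nonneg c), Hmu. }
  apply (pow_le_of_root_limit c); [exact Hm | lia | exact Hmu |]. intros j.
  destruct (bridges_pow m Lb HLb HB j) as [Lj [HLj [HBj Hlen]]].
  destruct (Hc (j * m)%nat) as [Lc [_ [HLc Hlenc]]].
  rewrite <- Hl, <- Hlen, <- Hlenc. apply NoDup_incl_length; [exact HLj |].
  intros b Hb. now apply HLc, Bridge_SAW, HBj.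
Qed.

Definition tail_flip (g : list point) (m k : nat) : list point :=
  walk_of (fun t => flip (pt g m) (pt g (m + t))) (k - m).

Lemma length_tail_flip g m k : length (tail_flip g m k) = S (k - m).
Proof. apply length_walk_of. Qed.

Lemma pt_tail_flip g m k t : (t <= k - m)%nat ->
  pt (tail_flip g m k) t = flip (pt g m) (pt g (m + t)).
Proof. intros Ht. now apply pt_walk_of. Qed.

Lemma last_argmin_tail_flip g m k b a : (m <= b)%nat -> last_argmin g k b a ->
  last_argmax (tail_flip g m k) (k - m) (b - m) (a - m).
Proof.
  intros Hb [Ha [Hle Hlt]]. split; [lia | split]; intros s Hs;
    rewrite !pt_tail_flip, !yc_flip by lia; replace (m + (a - m))%nat with a by lia.
  - specialize (Hle (m + s)%nat ltac:(lia)). lia.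
  - specialize (Hlt (m + s)%nat ltac:(lia)). lia.
Qed.

Lemma last_argmax_tail_flip g m k b a : (m <= b)%nat -> last_argmax g k b a ->
  last_argmin (tail_flip g m k) (k - m) (b - m) (a - m).
Proof.
  intros Hb [Ha [Hle Hlt]]. split; [lia | split]; intros s Hs;
    rewrite !pt_tail_flip, !yc_flip by lia; replace (m + (a - m))%nat with a by lia.
  - specialize (Hle (m + s)%nat ltac:(lia)). lia.
  - specialize (Hlt (m + s)%nat ltac:(lia)). lia.
Qed.

Lemma Bridge_prefix k g m : HSW k g -> last_argmax g k 0 m -> Bridge m (walk_of (pt g) m).
Proof.
  intros [[Lg [Og [Ng Ag]]] Yg] [Hm [Hle _]].
  refine (conj (conj (conj _ (conj _ (conj _ _))) _) _).
  - apply length_walk_of.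
  - now rewrite pt_walk_of by lia.
  - rewrite NoDup_pt, length_walk_of. intros i j Hi Hj.
    rewrite !pt_walk_of by lia. rewrite NoDup_pt in Ng. apply Ng; lia.
  - intros t Ht. rewrite !pt_walk_of by lia. apply Ag. lia.
  - intros t Ht. rewrite pt_walk_of by lia. apply Yg. lia.
  - intros t Ht. rewrite !pt_walk_of by lia. apply Hle. lia.
Qed.

(* Every point after the last maximum is strictly lower, so the flipped tail
   lies in the upper half-plane. *)
Lemma HSW_tail_flip k g m : HSW k g -> last_argmax g k 0 m -> HSW (k - m) (tail_flip g m k).
Proof.
  intros [[Lg [_ [Ng Ag]]] _] [Hm [_ Hlt]].
  refine (conj (conj _ (conj _ (conj _ _))) _).
  - apply length_walk_of.
  - rewrite pt_tail_flip, Nat.add_0_r by lia. apply flip_self.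
  - rewrite NoDup_pt, length_tail_flip. intros i j Hi Hj Eij.
    rewrite !pt_tail_flip in Eij by lia. apply flip_inj in Eij.
    rewrite NoDup_pt in Ng. enough (m + i = m + j)%nat by lia. apply Ng; lia || easy.
  - intros t Ht. rewrite !pt_tail_flip by lia. apply adj_flip.
    rewrite Nat.add_succ_r. apply Ag. lia.
  - intros t Ht. rewrite pt_tail_flip, yc_flip by lia. specialize (Hlt (m + t)%nat ltac:(lia)). lia.
Qed.

Lemma tail_flip_inj g g' m k : (m <= k)%nat -> length g = S k -> length g' = S k ->
  walk_of (pt g) m = walk_of (pt g') m -> tail_flip g m k = tail_flip g' m k -> g = g'.
Proof.
  intros Hm Lg Lg' Ehead Etail.
  assert (Hhead : forall s, (s <= m)%nat -> pt g s = pt g' s).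
  { intros s Hs. rewrite <- (pt_walk_of (pt g) m s), <- (pt_walk_of (pt g') m s), Ehead by lia.
    reflexivity. }
  apply walk_ext; [congruence |]. intros t Ht.
  destruct (Nat.le_gt_cases t m) as [Htm | Htm]; [now apply Hhead |].
  assert (E := f_equal (fun w => pt w (t - m)%nat) Etail). cbv beta in E.
  rewrite !pt_tail_flip, (Hhead m) in E by lia. replace (m + (t - m))%nat with t in E by lia.
  now apply flip_inj in E.
Qed.

Lemma num_branches_tail_flip g k r :
  num_branches g k (S r) ->
  exists m, (1 <= k)%nat /\ last_argmax g k 0 m /\ num_branches (tail_flip g m k) (k - m) r.
Proof.
  intros [a [A0 [Ai [Ar An]]]].
  assert (Hmono : forall i, (1 <= i <= S r)%nat -> (a 1 <= a i <= k)%nat).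
  { intros i Hi. induction i as [|i IH]; [lia |].
    specialize (Ai (S i) Hi). destruct (Nat.eq_dec i 0) as [-> | Hi0].
    - destruct Ai as [Ha _]. lia.
    - specialize (IH ltac:(lia)). simpl in Ai. destruct (Nat.odd (S i)); destruct Ai as [Ha _]; lia. }
  exists (a 1%nat). split; [specialize (An 0%nat ltac:(lia)); lia | split].
  { specialize (Ai 1%nat ltac:(lia)). simpl in Ai. now rewrite A0 in Ai. }
  exists (fun i => (a (S i) - a 1%nat)%nat). split; [lia | split; [| split]].
  - intros i Hi. specialize (Ai (S i) ltac:(lia)). specialize (Hmono i).
    replace (S (pred i)) with i in * by lia.
    rewrite Nat.odd_succ, <- Nat.negb_odd in Ai. simpl in Ai.
    destruct (Nat.odd i); simpl in Ai.
    + apply last_argmin_tail_flip; [lia | exact Ai].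
    + apply last_argmax_tail_flip; [lia | exact Ai].
  - now rewrite Ar.
  - intros i Hi E. specialize (An (S i) ltac:(lia)). specialize (Hmono (S i) ltac:(lia)). lia.
Qed.

Lemma HSW_zero g : HSW 0 g -> g = [(0%Z, 0%Z)].
Proof.
  intros [[Lg [Og _]] _]. destruct g as [|p [|q g]]; try discriminate Lg.
  unfold pt in Og. simpl in Og. now subst.
Qed.

Definition first_branch (k r : nat) (g : list point) (m : nat) : Prop :=
  (1 <= m <= k)%nat /\ Bridge m (walk_of (pt g) m) /\
  HSW (k - m) (tail_flip g m k) /\ num_branches (tail_flip g m k) (k - m) r.

Lemma first_branch_exists k r g :
  HSW k g -> num_branches g k (S r) -> exists m, first_branch k r g m.
Proof.
  intros Hg Hbr. destruct (num_branches_tail_flip g k r Hbr) as [m [Hk [Hmax Htail]]].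
  exists m. split; [| split; [| split]].
  - destruct Hg as [[_ [Og _]] Yg], Hmax as [Hm [Hle _]]. split; [| lia].
    destruct m; [| lia]. specialize (Hle 1%nat ltac:(lia)). specialize (Yg 1%nat ltac:(lia)).
    rewrite Og in Hle. simpl in Hle. lia.
  - exact (Bridge_prefix k g m Hg Hmax).
  - exact (HSW_tail_flip k g m Hg Hmax).
  - exact Htail.
Qed.

Section BranchCount.

Variable mu : R.
Hypothesis mu_ge0 : 0 <= mu.
Hypothesis bridge_le : forall m, (1 <= m)%nat -> at_most (Bridge m) (mu ^ m).

Lemma branch_bound_ge0 k r : 0 <= INR (S k) ^ r * mu ^ k.
Proof. apply Rmult_le_pos; apply pow_le; [apply pos_INR | exact mu_ge0]. Qed.

(* A walk with a given first branch is determined by that bridge together with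
   its flipped tail. *)
Lemma first_branch_fiber_bound k r m :
  (forall k', at_most (fun g => HSW k' g /\ num_branches g k' r) (INR (S k') ^ r * mu ^ k')) ->
  at_most (fun g => (HSW k g /\ num_branches g k (S r)) /\ first_branch k r g m)
          (INR (S k) ^ r * mu ^ k).
Proof.
  intros IH. destruct (le_lt_dec 1 m) as [Hm1 | Hm1]; [destruct (le_lt_dec m k) as [Hmk | Hmk] |].
  2, 3: eapply at_most_le; [apply at_most_empty; intros g [_ [Hm _]]; lia | apply branch_bound_ge0].
  replace (INR (S k) ^ r * mu ^ k) with (mu ^ m * (INR (S k) ^ r * mu ^ (k - m)))
    by (rewrite Rmult_comm, Rmult_assoc, <- pow_add; do 3 f_equal; lia).
  apply (at_most_fibers _ (fun g b => b = walk_of (pt g) m)).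
  - apply Rmult_le_pos; apply pow_le; [apply pos_INR | exact mu_ge0].
  - intros g _. eauto.
  - eapply at_most_sub; [| exact (bridge_le m Hm1)]. now intros b [g [[_ [_ [Hb _]]] ->]].
  - intros b. eapply at_most_le.
    + refine (at_most_inj _ _ (fun g => tail_flip g m k) _ _ _ (IH (k - m)%nat)).
      * now intros g [[_ [_ [_ Htail]]] _].
      * intros g g' [[[[[Lg _] _] _] _] Eg] [[[[[Lg' _] _] _] _] Eg'].
        apply tail_flip_inj; congruence || lia.
    + apply Rmult_le_compat_r; [apply pow_le, mu_ge0 |].
      apply pow_incr. split; [apply pos_INR | apply le_INR; lia].
Qed.

(* Peeling off branches one at a time: there are at most [k + 1] choices for
   the end of the first branch, which is a bridge. *)
Lemma HSW_branches_bound r k :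
  at_most (fun g => HSW k g /\ num_branches g k r) (INR (S k) ^ r * mu ^ k).
Proof.
  revert k. induction r as [|r IH]; intros k.
  - destruct k as [|k].
    + replace (INR 1 ^ 0 * mu ^ 0) with 1 by (simpl; ring).
      apply (at_most_singleton _ [(0%Z, 0%Z)]). intros g [Hg _]. exact (HSW_zero g Hg).
    + eapply at_most_le; [| apply branch_bound_ge0].
      apply at_most_empty. intros g [_ [a [A0 [_ [Ar _]]]]]. congruence.
  - replace (INR (S k) ^ S r * mu ^ k) with (INR (S k) * (INR (S k) ^ r * mu ^ k)) by (simpl; ring).
    apply (at_most_fibers _ (first_branch k r)).
    + apply branch_bound_ge0.
    + intros g [Hg Hbr]. exact (first_branch_exists k r g Hg Hbr).
    + apply at_most_lt. intros m [g [_ [Hm _]]]. lia.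
    + intros m. exact (first_branch_fiber_bound k r m IH).
Qed.

Lemma few_branches_bound k x : 0 <= x ->
  at_most (fun g => HSW k g /\ exists r, num_branches g k r /\ INR r < x)
          ((x + 1) * Rpower (INR (S k)) x * mu ^ k).
Proof.
  intros Hx. set (M := Z.to_nat (up x)).
  assert (HM : x < INR M <= x + 1).
  { destruct (archimed x) as [Hup1 Hup2]. unfold M.
    rewrite INR_IZR_INZ, Z2Nat.id by (apply le_IZR; lra). lra. }
  rewrite Rmult_assoc.
  apply (at_most_fibers _ (fun g r => HSW k g /\ num_branches g k r /\ INR r < x)).
  - apply Rmult_le_pos; [left; apply Rpower_pos | apply pow_le, mu_ge0].
  - intros g [Hg [r Hr]]. exists r. now split.
  - eapply at_most_le; [| apply HM]. apply at_most_lt.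
    intros r [g [_ [_ [_ Hr]]]]. apply INR_lt. lra.
  - intros r. destruct (Rlt_le_dec (INR r) x) as [Hr | Hr].
    + eapply at_most_le.
      * eapply at_most_sub; [| apply (HSW_branches_bound r k)]. now intros g [_ [Hg [Hbr _]]].
      * apply Rmult_le_compat_r; [apply pow_le, mu_ge0 |].
        rewrite <- Rpower_pow by (apply lt_0_INR; lia).
        apply Rle_Rpower; [apply (le_INR 1); lia | lra].
    + eapply at_most_le; [apply at_most_empty; intros g [_ [_ [_ Hr']]]; lra |].
      apply Rmult_le_pos; [left; apply Rpower_pos | apply pow_le, mu_ge0].
Qed.

End BranchCount.

(* [7y + 1 <= e^(7y)] and [ln (n + 1) <= ln n + 1]; the remaining [14 y] is
   absorbed by [y ln n] once [ln n >= 14]. *)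
Lemma few_branch_factor_le n k y : exp 14 <= INR n -> 0 <= y -> (k <= n)%nat ->
  (7 * y + 1) * Rpower (INR (S k)) (7 * y) <= exp (8 * y * ln (INR n)).
Proof.
  intros Hn Hy Hk. pose proof (exp_pos 14) as Hexp14.
  assert (Hln : 14 <= ln (INR n)) by (rewrite <- (ln_exp 14); now apply ln_le_compat).
  assert (Hln1 : ln (INR (S n)) <= ln (INR n) + 1).
  { rewrite <- (ln_exp 1). rewrite <- ln_mult by (lra || apply exp_pos).
    apply ln_le_compat; [apply lt_0_INR; lia |].
    rewrite S_INR. pose proof (exp_ineq1_le 1). pose proof (exp_ineq1_le 14). nra. }
  assert (Hpow : Rpower (INR (S k)) (7 * y) <= exp (7 * y * ln (INR (S n)))).
  { apply (Rle_Rpower_l _ _ (7 * y)); [lra |]. split; [apply lt_0_INR; lia | apply le_INR; lia]. }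
  apply Rle_trans with (exp (7 * y) * exp (7 * y * ln (INR (S n)))).
  - apply Rmult_le_compat; [lra | left; apply Rpower_pos | | exact Hpow].
    pose proof (exp_ineq1_le (7 * y)). lra.
  - rewrite <- exp_plus. apply exp_le_compat. nra.
Qed.

Theorem mainTheorem9 (eps : R) (Heps : 0 < eps < 1/2)
  (c : nat -> nat) (Hc : forall n, IsCard (SAW n) (c n))
  (mu : R) (Hmu : Un_cv (fun n => Rpower (INR (c n)) (/ INR n)) mu) :
  exists N : nat, forall n k : nat, (N <= n)%nat -> (k <= n)%nat ->
    forall L : list (list point), NoDup L ->
      (forall g, In g L -> FewBranchHSW eps n k g) ->
      INR (length L) <= exp (8 * Rpower (INR n) (1/2 - eps) * ln (INR n)) * mu ^ k.
Proof.
  exists (Z.to_nat (up (exp 14))). intros n k HN Hk L HL Hfew.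
  assert (Hn : exp 14 <= INR n).
  { destruct (archimed (exp 14)) as [Hup _]. apply le_INR in HN.
    rewrite INR_IZR_INZ, Z2Nat.id in HN by (apply le_IZR; pose proof (exp_pos 14); lra). lra. }
  pose proof (root_limit_nonneg c mu Hmu) as Hmu0.
  set (y := Rpower (INR n) (1/2 - eps)).
  assert (Hy : 0 <= y) by (left; apply Rpower_pos).
  eapply Rle_trans.
  - exact (few_branches_bound mu Hmu0 (bridge_bound c Hc mu Hmu) k (7 * y) ltac:(lra) L HL Hfew).
  - apply Rmult_le_compat_r; [now apply pow_le |]. now apply few_branch_factor_le.
Qed.
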